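(* Let $G$ be any weighted finite graph with $N$ vertices. Then for each $1\leq k\leq N$, \[ \overline{h}(k)\leq 1-h(k). \] Moreover: (i) $\overline{h}(k)=1$ if and only if $G$ has at least $k$ connected components each of which is bipartite. (ii) If $G$ is bipartite, then $h(k)+\overline{h}(k)=1$ for each $1\leq k\leq N$. (iii) If $h(k)+\overline{h}(k)=1$, then for a $k$-sub-bipartition $\{(V_{2i-1},V_{2i})\}_{i=1}^k$ attaining the maximum in the definition of $\overline{h}(k)$, and an index $i_0$ with $\phi(V_{2i_0-1}\cup V_{2i_0})=\max_{1\leq i\leq k}\phi(V_{2i-1}\cup V_{2i})$, one has $|E(V_{2i_0-1},V_{2i_0-1})|=|E(V_{2i_0},V_{2i_0})|=0$.
   Context: $G=(V,E,w)$ is a finite undirected graph without self-loops, with $N=|V|$; each edge $\{u,v\}$ carries a positive symmetric weight $w_{uv}$, and $w_{uv}=0$ for non-edges. $d_u=\sum_v w_{uv}$ (implicitly positive). For $A,B\subseteq V$, $|E(A,B)|:=\sum_{u\in A,v\in B}w_{uv}$, $\mathrm{vol}(A):=\sum_{u\in A}d_u$, $\overline{A}=V\setminus A$. For nonempty $S$, $\phi(S):=|E(S,\overline{S})|/\mathrm{vol}(S)$; $h(k):=\min\max_{1\leq i\leq k}\phi(S_i)$ over all collections of $k$ nonempty pairwise disjoint subsets $S_1,\ldots,S_k\subseteq V$. For disjoint $V_1,V_2$ with $V_1\cup V_2\neq\emptyset$, $\overline{\phi}(V_1,V_2):=2|E(V_1,V_2)|/\mathrm{vol}(V_1\cup V_2)$.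 A $k$-sub-bipartition is a collection of $k$ pairs $(V_1,V_2),\ldots,(V_{2k-1},V_{2k})$ of pairwise disjoint subsets of $V$ with $V_{2i-1}\cup V_{2i}\neq\emptyset$ for each $i$ (individual sets may be empty); $\overline{h}(k):=\max\min_{1\leq i\leq k}\overline{\phi}(V_{2i-1},V_{2i})$ over all $k$-sub-bipartitions. A graph is bipartite if its vertex set splits into two classes with every edge joining vertices of different classes. *)

From mathcomp Require Import all_boot all_order all_algebra.
Set Implicit Arguments. Unset Strict Implicit. Unset Printing Implicit Defensive.
Import Order.TTheory GRing.Theory Num.Theory.
Local Open Scope ring_scope.

Section Graph.
Variables (R : realFieldType) (V : finType) (w : V -> V -> R).

Definition cutw (A B : {set V}) : R := \sum_(u in A) \sum_(v in B) w u v.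
Definition deg (u : V) : R := \sum_(v : V) w u v.
Definition vol (A : {set V}) : R := \sum_(u in A) deg u.
Definition phi (S : {set V}) : R := cutw S (~: S) / vol S.
Definition phibar (A B : {set V}) : R := 2 * cutw A B / vol (A :|: B).

Definition is_kcoll (k : nat) (S : {ffun 'I_k -> {set V}}) : bool :=
  [forall i, S i != set0] &&
  [forall i, forall j, (i != j) ==> [disjoint S i & S j]].

(* k-sub-bipartition: pairs (P i).1 = V_{2i-1}, (P i).2 = V_{2i}; all 2k sets
   pairwise disjoint, each pair with nonempty union *)
Definition is_ksubbip (k : nat) (P : {ffun 'I_k -> {set V} * {set V}}) : bool :=
  [forall i, ((P i).1 :|: (P i).2 != set0) && [disjoint (P i).1 & (P i).2]] &&
  [forall i, forall j, (i != j) ==>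
     [disjoint (P i).1 :|: (P i).2 & (P j).1 :|: (P j).2]].

Definition maxphi (k : nat) (S : {ffun 'I_k -> {set V}}) : R :=
  \big[Num.max/0]_(i < k) phi (S i).

Definition minphibar (k : nat) (P : {ffun 'I_k -> {set V} * {set V}}) : R :=
  \big[Num.min/1]_(i < k) phibar (P i).1 (P i).2.

(* h(k) = min over k-collections of max_i phi(S_i).  The neutral element 1 of
   the outer min is irrelevant when a k-collection exists (k <= N), since
   phi <= 1 whenever w >= 0. *)
Definition h (k : nat) : R :=
  \big[Num.min/1]_(S : {ffun 'I_k -> {set V}} | is_kcoll S) maxphi S.

(* hbar(k) = max over k-sub-bipartitions of min_i phibar. Neutral element 0
   is irrelevant since phibar >= 0 and sub-bipartitions exist for k <= N. *)
Definition hbar (k : nat) : R :=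
  \big[Num.max/0]_(P : {ffun 'I_k -> {set V} * {set V}} | is_ksubbip P)
     minphibar P.

Definition edge : rel V := fun u v => 0 < w u v.
Definition component (x : V) : {set V} := [set y | connect edge x y].
Definition components : {set {set V}} := [set component x | x in V].

Definition bipartite_on (C : {set V}) : bool :=
  [exists A : {set V}, forall u, forall v,
     [&& u \in C, v \in C & edge u v] ==> ((u \in A) != (v \in A))].

Definition num_bipartite_components : nat :=
  #|[set C in components | bipartite_on C]|.

Definition bipartite : Prop :=
  exists A : {set V}, forall u v, edge u v -> (u \in A) != (v \in A).

End Graph.

From mathcomp Require Import all_boot all_order all_algebra.
From mathcomp Require Import lra ring.
Set Implicit Arguments. Unset Strict Implicit. Unset Printing Implicit Defensive.
Import Order.TTheory GRing.Theory Num.Theory.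
Local Open Scope ring_scope.

(* Splitting vol(A u B) by where the other endpoint of each edge lies gives the
   identity  phibar(A, B) = 1 - phi(A u B) - (|E(A,A)| + |E(B,B)|) / vol(A u B).
   Hence phibar of every pair is at most 1 - phi of its union, with equality iff
   both parts are independent sets.  Taking for the pair the union of maximal
   phi in a sub-bipartition, and bounding that phi below by h(k), gives
   hbar(k) <= 1 - h(k) and item (iii).  Splitting an optimal k-collection along
   a bipartition of G gives (ii).  Finally phibar(A, B) = 1 says exactly that
   A u B has no outgoing edges and A, B are independent, so a pair of phibar
   one contains a whole component, bipartitioned by A; conversely k bipartite
   components split along their bipartitions are pairs of phibar one (i). *)

Lemma big_setU_disjoint (R : nmodType) (T : finType) (A B : {set T}) (F : T -> R) :
  [disjoint A & B] -> \sum_(i in A :|: B) F i = \sum_(i in A) F i + \sum_(i in B) F i.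
Proof. by move=> dAB; rewrite -bigU //; apply: eq_bigl => i; rewrite !inE. Qed.

Section Collections.
Variables (V : finType) (k : nat).

Definition unions (P : {ffun 'I_k -> {set V} * {set V}}) : {ffun 'I_k -> {set V}} :=
  [ffun i => (P i).1 :|: (P i).2].

Lemma kcollP (S : {ffun 'I_k -> {set V}}) :
  reflect ((forall i, S i != set0) /\ (forall i j, i != j -> [disjoint S i & S j]))
          (is_kcoll S).
Proof.
apply: (iffP andP) => [[/forallP S0 /forallP Sdisj] | [S0 Sdisj]].
  by split=> // i j; move/forallP: (Sdisj i) => /(_ j) /implyP.
by split; apply/forallP => // i; apply/forallP => j; apply/implyP; apply: Sdisj.
Qed.

Lemma ksubbipP (P : {ffun 'I_k -> {set V} * {set V}}) :
  reflect [/\ forall i, (P i).1 :|: (P i).2 != set0,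
              forall i, [disjoint (P i).1 & (P i).2]
            & forall i j, i != j ->
                [disjoint (P i).1 :|: (P i).2 & (P j).1 :|: (P j).2]]
          (is_ksubbip P).
Proof.
apply: (iffP andP) => [[/forallP P0 /forallP Pdisj] | [P0 Pdisj Udisj]].
  split=> [i | i | i j]; try by case/andP: (P0 i).
  by move/forallP: (Pdisj i) => /(_ j) /implyP.
split; apply/forallP => i; first by rewrite P0 Pdisj.
by apply/forallP => j; apply/implyP; apply: Udisj.
Qed.

Lemma kcoll_unions P : is_ksubbip P -> is_kcoll (unions P).
Proof.
case/ksubbipP => P0 _ Udisj; apply/kcollP.
by split=> [i | i j]; rewrite !ffunE; [apply: P0 | apply: Udisj].
Qed.

Lemma ksubbip_split (S : {ffun 'I_k -> {set V}}) (A : 'I_k -> {set V}) :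
  is_kcoll S -> is_ksubbip [ffun i => (S i :&: A i, S i :\: A i)].
Proof.
case/kcollP => S0 Sdisj; apply/ksubbipP.
split=> [i | i | i j]; rewrite ?ffunE /= ?setID.
- exact: S0.
- by rewrite -setI_eq0; apply/eqP/setP => x; rewrite !inE; case: (x \in A i); rewrite ?andbF.
- exact: Sdisj.
Qed.

Lemma exists_kcoll : (k <= #|V|)%N -> exists S : {ffun 'I_k -> {set V}}, is_kcoll S.
Proof.
move=> kV; pose x (i : 'I_k) := enum_val (widen_ord kV i).
exists [ffun i => [set x i]]; apply/kcollP; split=> [i | i j]; rewrite !ffunE.
  by apply/set0Pn; exists (x i); rewrite inE.
apply: contraR; rewrite disjoints1 inE negbK => /eqP /enum_val_inj /(congr1 val) ij.
by apply/eqP/val_inj.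
Qed.

End Collections.

Section WeightedGraph.
Variables (R : realFieldType) (V : finType) (w : V -> V -> R).
Hypotheses (w_sym : forall u v, w u v = w v u) (w_nneg : forall u v, 0 <= w u v)
  (deg_pos : forall u, 0 < deg w u).
Implicit Types (A B C S X : {set V}) (u v x y : V).

Lemma cutwUl A B X : [disjoint A & B] -> cutw w (A :|: B) X = cutw w A X + cutw w B X.
Proof. exact: big_setU_disjoint. Qed.

Lemma cutwUr A B X : [disjoint A & B] -> cutw w X (A :|: B) = cutw w X A + cutw w X B.
Proof.
by move=> dAB; rewrite /cutw -big_split; apply: eq_bigr => u _; apply: big_setU_disjoint.
Qed.

Lemma cutwC A B : cutw w A B = cutw w B A.
Proof. by rewrite /cutw exchange_big; apply: eq_bigr => u _; apply: eq_bigr => v _. Qed.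

Lemma cutw_ge0 A B : 0 <= cutw w A B.
Proof. by apply: sumr_ge0 => u _; apply: sumr_ge0. Qed.

Lemma cutw_eq0 A B : cutw w A B = 0 <-> {in A & B, forall u v, w u v = 0}.
Proof.
split=> [cut0 u v uA vB | w0]; last by apply: big1 => u uA; apply: big1 => v vB; apply: w0.
have := psumr_eq0P (fun u _ => sumr_ge0 _ (fun v _ => w_nneg u v)) cut0 uA.
by move/psumr_eq0P; apply.
Qed.

Lemma weight_eq0 u v : (w u v == 0) = ~~ edge w u v.
Proof. by rewrite /edge lt_def w_nneg andbT negbK. Qed.

Lemma vol_cutw S : vol w S = cutw w S S + cutw w S (~: S).
Proof.
rewrite /vol /cutw -big_split; apply: eq_bigr => u _.
by rewrite /deg (bigID [in S]); congr (_ + _); apply: eq_bigl => v; rewrite !inE.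
Qed.

Lemma vol_ge0 S : 0 <= vol w S.
Proof. by apply: sumr_ge0 => u _; apply: ltW. Qed.

Lemma vol_gt0 S : S != set0 -> 0 < vol w S.
Proof.
case/set0Pn => x xS; rewrite /vol (bigD1 x) //= ltr_wpDr //.
by apply: sumr_ge0 => u _; apply: ltW.
Qed.

Lemma phi_ge0 S : 0 <= phi w S.
Proof. by rewrite divr_ge0 ?cutw_ge0 ?vol_ge0. Qed.

Lemma phibar_ge0 A B : 0 <= phibar w A B.
Proof. by rewrite divr_ge0 ?mulr_ge0 ?cutw_ge0 ?vol_ge0. Qed.

Lemma phi_le1 S : S != set0 -> phi w S <= 1.
Proof. by move=> S0; rewrite ler_pdivrMr ?vol_gt0 // mul1r vol_cutw lerDr cutw_ge0. Qed.

Lemma phi_eq0 S : S != set0 -> phi w S = 0 <-> cutw w S (~: S) = 0.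
Proof.
move=> S0; rewrite /phi; split=> [/eqP | ->]; last by rewrite mul0r.
by rewrite mulf_eq0 invr_eq0 (gt_eqF (vol_gt0 S0)) orbF => /eqP.
Qed.

Lemma phibarE A B : [disjoint A & B] -> A :|: B != set0 ->
  phibar w A B = 1 - phi w (A :|: B) - (cutw w A A + cutw w B B) / vol w (A :|: B).
Proof.
move=> dAB AB0.
have volE : vol w (A :|: B) = cutw w A A + cutw w B B + 2 * cutw w A B
    + cutw w (A :|: B) (~: (A :|: B)).
  by rewrite vol_cutw cutwUl // !cutwUr // (cutwC B A); ring.
rewrite /phibar /phi; transitivity ((vol w (A :|: B)
    - cutw w (A :|: B) (~: (A :|: B)) - (cutw w A A + cutw w B B)) / vol w (A :|: B)).
  by congr (_ / _); rewrite volE; ring.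
by field; rewrite gt_eqF ?vol_gt0.
Qed.

Lemma phibar_le A B : [disjoint A & B] -> A :|: B != set0 ->
  phibar w A B <= 1 - phi w (A :|: B).
Proof.
move=> dAB AB0; rewrite phibarE // lerBlDr lerDl divr_ge0 ?addr_ge0 ?cutw_ge0 //.
exact/ltW/vol_gt0.
Qed.

Lemma phibar_eq_1_phi A B : [disjoint A & B] -> A :|: B != set0 ->
  phibar w A B = 1 - phi w (A :|: B) <-> cutw w A A = 0 /\ cutw w B B = 0.
Proof.
move=> dAB AB0; rewrite phibarE //; split=> [/eqP | [-> ->]]; last first.
  by rewrite addr0 mul0r subr0.
rewrite -subr_eq0 addrAC subrr add0r oppr_eq0 mulf_eq0 invr_eq0.
rewrite (gt_eqF (vol_gt0 AB0)) orbF paddr_eq0 ?cutw_ge0 //.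
by case/andP => /eqP -> /eqP ->.
Qed.

Lemma phibar_eq1 A B : [disjoint A & B] -> A :|: B != set0 ->
  phibar w A B = 1 <->
  [/\ cutw w (A :|: B) (~: (A :|: B)) = 0, cutw w A A = 0 & cutw w B B = 0].
Proof.
move=> dAB AB0; split=> [phibar1 | [out0 AA BB]].
  have phi0 : phi w (A :|: B) = 0.
    by have := phibar_le dAB AB0; have := phi_ge0 (A :|: B); rewrite phibar1; lra.
  have [|AA BB] := (phibar_eq_1_phi dAB AB0).1; first by rewrite phi0 subr0.
  by split=> //; apply/(phi_eq0 AB0).
by rewrite ((phibar_eq_1_phi dAB AB0).2 (conj AA BB)) (proj2 (phi_eq0 AB0) out0) subr0.
Qed.

Lemma edge_sym : symmetric (edge w).
Proof. by move=> u v; rewrite /edge w_sym. Qed.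

Lemma mem_component x : x \in component w x.
Proof. by rewrite inE connect0. Qed.

Lemma cutw_component x : cutw w (component w x) (~: component w x) = 0.
Proof.
apply/cutw_eq0 => u v; rewrite !inE => xu xv; apply/eqP; rewrite weight_eq0.
by apply: contra xv => uv; apply: connect_trans xu (connect1 uv).
Qed.

Lemma component_sub S x : cutw w S (~: S) = 0 -> x \in S -> component w x \subset S.
Proof.
move=> out0 xS.
have S_closed : closed (edge w) (mem S).
  apply: (intro_closed (sym_connect_sym edge_sym)) => u v uv uS; apply: contraLR uv => vS.
  by rewrite -weight_eq0 (proj1 (cutw_eq0 _ _) out0) // inE.
by apply/subsetP => y; rewrite inE => xy; rewrite -(closed_connect S_closed xy).
Qed.

Lemma component_disjoint x y :
  component w x != component w y -> [disjoint component w x & component w y].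
Proof.
have csym := sym_connect_sym edge_sym.
rewrite -setI_eq0; apply: contraR => /set0Pn [z]; rewrite !inE => /andP [xz yz].
have xy : connect (edge w) x y by apply: connect_trans xz _; rewrite csym.
by apply/eqP/setP => t; rewrite !inE (same_connect csym xy).
Qed.

Lemma bipartite_onP C : reflect
  (exists A, {in C &, forall u v, edge w u v -> (u \in A) != (v \in A)})
  (bipartite_on w C).
Proof.
apply: (iffP existsP) => [[A /forallP bipA] | [A bipA]]; exists A.
  move=> u v uC vC uv; move/forallP: (bipA u) => /(_ v) /implyP; apply.
  by rewrite uC vC uv.
by apply/forallP => u; apply/forallP => v; apply/implyP => /and3P [uC vC]; apply: bipA.
Qed.

Lemma cutw_bipartite_split C A :
  {in C &, forall u v, edge w u v -> (u \in A) != (v \in A)} ->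
  cutw w (C :&: A) (C :&: A) = 0 /\ cutw w (C :\: A) (C :\: A) = 0.
Proof.
move=> bipA; split; apply/cutw_eq0 => u v; rewrite !inE.
  move=> /andP [uC uA] /andP [vC vA]; apply/eqP; rewrite weight_eq0.
  by apply/negP => /(bipA u v uC vC); rewrite uA vA.
move=> /andP [uA uC] /andP [vA vC]; apply/eqP; rewrite weight_eq0.
by apply/negP => /(bipA u v uC vC); rewrite (negbTE uA) (negbTE vA).
Qed.

Lemma bipartite_component_sub A B x :
  cutw w (A :|: B) (~: (A :|: B)) = 0 -> cutw w A A = 0 -> cutw w B B = 0 ->
  x \in A :|: B -> component w x \subset A :|: B /\ bipartite_on w (component w x).
Proof.
move=> out0 AA BB xAB; have xsub := component_sub out0 xAB; split=> //.
apply/bipartite_onP; exists A => u v /(subsetP xsub) uAB /(subsetP xsub) vAB.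
move=> uv; apply: contraTneq uv => sameA; rewrite -weight_eq0; apply/eqP.
move: uAB vAB; rewrite !inE -sameA; case: (boolP (u \in A)) => uA /= uB vB.
  by apply: (proj1 (cutw_eq0 _ _) AA); rewrite // -sameA.
exact: (proj1 (cutw_eq0 _ _) BB).
Qed.

Variable k : nat.

Lemma h_ge0 : 0 <= h w k.
Proof. by apply: le_bigmin => // S _; apply: bigmax_ge_id. Qed.

Lemma h_le_maxphi (S : {ffun 'I_k -> {set V}}) : is_kcoll S -> h w k <= maxphi w S.
Proof. exact: bigmin_le_cond. Qed.

Lemma minphibar_le_hbar (P : {ffun 'I_k -> {set V} * {set V}}) :
  is_ksubbip P -> minphibar w P <= hbar w k.
Proof. exact: le_bigmax_cond. Qed.

Lemma h_attained : (k <= #|V|)%N ->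
  exists2 S : {ffun 'I_k -> {set V}}, is_kcoll S & h w k = maxphi w S.
Proof.
case/exists_kcoll => S0 S0coll.
have maxphi_le1 (S : {ffun 'I_k -> {set V}}) : is_kcoll S -> maxphi w S <= 1.
  by case/kcollP => Sne0 _; apply: bigmax_le => // i _; apply: phi_le1.
have [S Scoll hS] := eq_bigmin S0 _ (@maxphi _ _ w k) S0coll maxphi_le1.
by exists S.
Qed.

Lemma hbar_attained : (k <= #|V|)%N ->
  exists2 P : {ffun 'I_k -> {set V} * {set V}}, is_ksubbip P & hbar w k = minphibar w P.
Proof.
case/exists_kcoll => S0 /(ksubbip_split (fun=> set0)) P0bip.
have minphibar_ge0 (P : {ffun 'I_k -> {set V} * {set V}}) : is_ksubbip P -> 0 <= minphibar w P.
  by move=> _; apply: le_bigmin => // i _; apply: phibar_ge0.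
have [P Pbip hbarP] := eq_bigmax _ _ (@minphibar _ _ w k) P0bip minphibar_ge0.
by exists P.
Qed.

Lemma minphibar_le (P : {ffun 'I_k -> {set V} * {set V}}) :
  (0 < k)%N -> is_ksubbip P -> minphibar w P <= 1 - maxphi w (unions P).
Proof.
move=> k0 /ksubbipP [P0 Pdisj _]; rewrite /maxphi.
have [i _ ->] := eq_bigmax (Ordinal k0) xpredT (fun i => phi w (unions P i)) isT
  (fun i _ => phi_ge0 _).
rewrite ffunE; apply: le_trans (phibar_le (Pdisj i) (P0 i)); exact: bigmin_le.
Qed.

Lemma hbar_le : (0 < k)%N -> hbar w k <= 1 - h w k.
Proof.
move=> k0; apply: bigmax_le => [|P Pbip]; first by rewrite subr_ge0 bigmin_le_id.
apply: le_trans (minphibar_le k0 Pbip) _.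
by rewrite lerD2l lerN2 h_le_maxphi ?kcoll_unions.
Qed.

Lemma hbar_bipartite : (0 < k)%N -> (k <= #|V|)%N -> bipartite w -> h w k + hbar w k = 1.
Proof.
move=> k0 kV [A bipA]; have [S Scoll hS] := h_attained kV.
pose P := [ffun i => (S i :&: A, S i :\: A)].
have Pbip : is_ksubbip P := ksubbip_split (fun=> A) Scoll.
have /ksubbipP [P0 Pdisj _] := Pbip.
have phibarP i : phibar w (P i).1 (P i).2 = 1 - phi w (S i).
  have -> : S i = (P i).1 :|: (P i).2 by rewrite ffunE /= setID.
  apply/(phibar_eq_1_phi (Pdisj i) (P0 i)); rewrite ffunE.
  exact: cutw_bipartite_split (in2W bipA).
have : 1 - h w k <= hbar w k.
  apply: le_trans (minphibar_le_hbar Pbip); apply: le_bigmin => [|i _].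
    by rewrite lerBlDr lerDl h_ge0.
  by rewrite phibarP hS lerD2l lerN2; apply: (le_bigmax _ (fun j => phi w (S j))).
by have := hbar_le k0; lra.
Qed.

Lemma optimal_pair_cutw_eq0 (P : {ffun 'I_k -> {set V} * {set V}}) i0 :
  h w k + hbar w k = 1 -> is_ksubbip P -> minphibar w P = hbar w k ->
  phi w ((P i0).1 :|: (P i0).2) = maxphi w (unions P) ->
  cutw w (P i0).1 (P i0).1 = 0 /\ cutw w (P i0).2 (P i0).2 = 0.
Proof.
move=> sum1 Pbip Popt phi_i0; have /ksubbipP [P0 Pdisj _] := Pbip.
apply/(phibar_eq_1_phi (Pdisj i0) (P0 i0)).
have := phibar_le (Pdisj i0) (P0 i0).
have : minphibar w P <= phibar w (P i0).1 (P i0).2 by apply: bigmin_le.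
have := h_le_maxphi (kcoll_unions Pbip); rewrite -phi_i0.
lra.
Qed.

Lemma bipartite_components_of_hbar1 :
  (k <= #|V|)%N -> hbar w k = 1 -> (k <= num_bipartite_components w)%N.
Proof.
move=> kV hbar1; have [P Pbip Popt] := hbar_attained kV.
have /ksubbipP [P0 Pdisj Udisj] := Pbip.
have /fin_all_exists [x xP] i : exists x, x \in (P i).1 :|: (P i).2 by apply/set0Pn.
have comp_i i : component w (x i) \subset (P i).1 :|: (P i).2
                /\ bipartite_on w (component w (x i)).
  have [|out0 AA BB] := (phibar_eq1 (Pdisj i) (P0 i)).1.
  - apply: le_anti; rewrite (le_trans (phibar_le _ _)) ?gerBl ?phi_ge0 //=.
    by rewrite -hbar1 Popt bigmin_le.
  - exact: bipartite_component_sub.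
pose f i := component w (x i).
have f_inj : injective f.
  move=> i j fij; apply/eqP; apply: contraT => ij.
  have := Udisj i j ij; rewrite -setI_eq0 => /eqP /setP /(_ (x i)).
  have xi_fj : x i \in f j by rewrite -fij mem_component.
  by rewrite inE xP (subsetP (proj1 (comp_i j)) _ xi_fj) inE.
rewrite -[k]card_ord -(card_imset _ f_inj); apply: subset_leq_card.
apply/subsetP => _ /imsetP [i _ ->]; rewrite inE (proj2 (comp_i i)) andbT.
exact: imset_f.
Qed.

Lemma hbar1_of_bipartite_components :
  (0 < k)%N -> (k <= num_bipartite_components w)%N -> hbar w k = 1.
Proof.
rewrite /num_bipartite_components => k0 kB; pose C i := enum_val (widen_ord kB i).
have /fin_all_exists [xA CxA] i : exists xA : V * {set V}, C i = component w xA.1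
    /\ {in C i &, forall u v, edge w u v -> (u \in xA.2) != (v \in xA.2)}.
  have /setIdP [/imsetP [x _ Cx] /bipartite_onP [A bipA]] := enum_valP (widen_ord kB i).
  by exists (x, A).
pose S := [ffun i => C i].
have Scoll : is_kcoll S.
  apply/kcollP; split=> [i | i j ij]; rewrite !ffunE.
    by apply/set0Pn; exists (xA i).1; rewrite (proj1 (CxA i)) mem_component.
  rewrite (proj1 (CxA i)) (proj1 (CxA j)); apply: component_disjoint.
  rewrite -(proj1 (CxA i)) -(proj1 (CxA j)); apply: contra ij.
  by move/eqP/enum_val_inj/(congr1 val) => ij; apply/eqP/val_inj.
pose P := [ffun i => (S i :&: (xA i).2, S i :\: (xA i).2)].
have Pbip : is_ksubbip P := ksubbip_split (fun i => (xA i).2) Scoll.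
have /ksubbipP [P0 Pdisj _] := Pbip.
have phibar1 i : 1 <= phibar w (P i).1 (P i).2.
  have [Cx bipA] := CxA i.
  have UP : (P i).1 :|: (P i).2 = C i by rewrite !ffunE /= setID.
  suff -> : phibar w (P i).1 (P i).2 = 1 by [].
  apply/(phibar_eq1 (Pdisj i) (P0 i)); rewrite UP Cx cutw_component !ffunE /=.
  by have [AA BB] := cutw_bipartite_split bipA.
have : 1 <= hbar w k.
  by apply: le_trans (minphibar_le_hbar Pbip); apply: le_bigmin.
by have := hbar_le k0; have := h_ge0; lra.
Qed.

End WeightedGraph.

Theorem proposition3p1 (R : realFieldType) (V : finType) (w : V -> V -> R)
  (w_sym : forall u v, w u v = w v u)
  (w_loop : forall u, w u u = 0)
  (w_nneg : forall u v, 0 <= w u v)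
  (deg_pos : forall u, 0 < deg w u)
  (k : nat) (hk1 : (1 <= k)%N) (hkN : (k <= #|V|)%N) :
  hbar w k <= 1 - h w k
  /\ (hbar w k = 1 <-> (k <= num_bipartite_components w)%N)
  /\ (bipartite w -> h w k + hbar w k = 1)
  /\ (h w k + hbar w k = 1 ->
      forall P : {ffun 'I_k -> {set V} * {set V}},
        is_ksubbip P -> minphibar w P = hbar w k ->
        forall i0 : 'I_k,
          phi w ((P i0).1 :|: (P i0).2)
            = \big[Num.max/0]_(i < k) phi w ((P i).1 :|: (P i).2) ->
          cutw w (P i0).1 (P i0).1 = 0 /\ cutw w (P i0).2 (P i0).2 = 0).
Proof.
split; first exact: hbar_le.
split.
  split; first exact: bipartite_components_of_hbar1.
  exact: hbar1_of_bipartite_components.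
split; first exact: hbar_bipartite.
move=> sum1 P Pbip Popt i0 phi_i0; apply: optimal_pair_cutw_eq0 => //.
by rewrite phi_i0; apply: eq_bigr => i _; rewrite ffunE.
Qed.
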